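(* Let $(k_i)_{i\in\mathbb N}\subset\mathbb N$ satisfy $k_{2i}>1$ for infinitely many $i$ and $k_{2i-1}>1$ for infinitely many $i$. Then $\bigcap_{n\ge1} Q^+B_{k_n}B_{k_{n-1}}\cdots B_{k_1}$ is a single half-line; equivalently, for every nonzero $\vec a\in Q^+$ the limit $(u,v,w)=\lim_{n\to\infty}\frac{\vec aB_{k_n}\cdots B_{k_1}}{\|\vec aB_{k_n}\cdots B_{k_1}\|_1}$ exists and is independent of $\vec a$, i.e. the direction $(u,v,w)$ is uniquely determined by $(k_i)_{i\in\mathbb N}$.
   Context: Vectors are row vectors and matrices act by right multiplication. $Q^+=\{x\in\mathbb R^3:x_i\ge0\}$. For $k\in\mathbb N$, $B_k=\begin{pmatrix}0&1&k-1\\1&0&0\\0&1&k\end{pmatrix}$ (this equals $UA_k^{-1}U^{-1}$ with $A_k=\begin{pmatrix}0&k&k-1\\1&0&0\\0&1&1\end{pmatrix}$ and $U=\begin{pmatrix}0&1&0\\1&0&0\\0&0&-1\end{pmatrix}$); each $B_k$ maps $Q^+$ into itself. *)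

From HB Require Import structures.
From mathcomp Require Import all_boot all_order all_algebra.
From mathcomp Require Import all_classical all_reals all_analysis.
Set Implicit Arguments. Unset Strict Implicit. Unset Printing Implicit Defensive.
Import Order.TTheory GRing.Theory Num.Theory.
Local Open Scope ring_scope.

(* B_k = [[0,1,k-1],[1,0,0],[0,1,k]]; vectors are row vectors, acting by
   right multiplication. *)
Definition Bmx {R : realType} (k : nat) : 'M[R]_3 :=
  \matrix_(i < 3, j < 3)
    nth 0 (nth [::] [:: [:: 0; 1; k%:R - 1]; [:: 1; 0; 0]; [:: 0; 1; k%:R]] i) j.

Fixpoint Mprod {R : realType} (k : nat -> nat) (n : nat) : 'M[R]_3 :=
  match n with
  | 0 => 1%:M
  | n'.+1 => Bmx (k n'.+1) *m Mprod k n'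
  end.

Definition Qplus {R : realType} (x : 'rV[R]_3) : Prop := forall j, 0 <= x 0 j.

Definition in_cone {R : realType} (M : 'M[R]_3) (x : 'rV[R]_3) : Prop :=
  exists y, Qplus y /\ x = y *m M.

Definition norm1 {R : realType} (x : 'rV[R]_3) : R := \sum_(j < 3) `|x 0 j|.

From HB Require Import structures.
From mathcomp Require Import all_boot all_order all_algebra.
From mathcomp Require Import all_classical all_reals all_analysis.
Import Order.TTheory GRing.Theory Num.Theory.
Import numFieldNormedType.Exports.
Local Open Scope classical_set_scope.
Local Open Scope ring_scope.
From mathcomp Require Import ring lra zify.

(* Normalize the points of the cone Q^+ M_n, where M_n = B_{k_n}...B_{k_1}, to
   coordinate sum 1: they form the triangle spanned by the three normalized rows
   of M_n, and these triangles are nested since every B_k is nonnegative.  The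
   row sums s_i of M_n satisfy s_0, s_1 <= s_2.  Across a block of indices with
   k >= 2, then an even run of 1s, then k >= 2 again, every new row is
   y_0 r_0 + y_1 r_1 + y_2 r_2 in terms of the old rows r_i with
   y_0 + y_1 <= 3 y_2; so every new vertex puts weight at least 1/4 on the old
   third vertex, and the diameter of the triangle shrinks by the factor 3/4.
   The parity hypotheses provide infinitely many such blocks, so the triangles
   shrink to a single point: the direction of the half-line. *)

Section WeightedSums.
Context {R : realFieldType} {V : normedModType R} {n : nat}.
Implicit Types (x y : 'I_n -> R) (v w : 'I_n -> V).

Lemma norm_wsum_le {x w B} : (forall i, 0 <= x i) -> (forall i, `|w i| <= B) ->
  `|\sum_i x i *: w i| <= (\sum_i x i) * B.
Proof.
move=> x0 wB; rewrite mulr_suml; apply: le_trans (ler_norm_sum _ _ _) _.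
by apply: ler_sum => i _; rewrite normrZ ger0_norm // ler_wpM2l.
Qed.

Lemma norm_wsum_sub_le {x y v B} :
  (forall i, 0 <= x i) -> (forall i, 0 <= y i) -> \sum_i x i = \sum_i y i ->
  (forall i l, `|v i - v l| <= B) ->
  `|\sum_i x i *: v i - \sum_i y i *: v i| <= (\sum_i x i) * B.
Proof.
move=> x0 y0 sxy vB; set s := \sum_i x i.
have s0 : 0 <= s by exact: sumr_ge0.
have to_vertex l : `|\sum_i x i *: v i - s *: v l| <= s * B.
  rewrite scaler_suml -sumrB.
  under eq_bigr do rewrite -scalerBr.
  exact: norm_wsum_le.
have /predU1P [s_eq0|s_gt0] : (s == 0) || (0 < s) by rewrite -le0r.
  have x_eq0 i : x i = 0 by exact: (psumr_eq0P (fun i _ => x0 i) s_eq0).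
  have sy0 : \sum_i y i = 0 by rewrite -sxy.
  have y_eq0 i : y i = 0 by exact: (psumr_eq0P (fun i _ => y0 i) sy0).
  under eq_bigr do rewrite x_eq0 scale0r.
  under [X in _ - X]eq_bigr do rewrite y_eq0 scale0r.
  by rewrite s_eq0 subrr normr0 mul0r.
have key : s *: (\sum_i x i *: v i - \sum_i y i *: v i) =
           \sum_l y l *: (\sum_i x i *: v i - s *: v l).
  under [RHS]eq_bigr do rewrite scalerBr.
  rewrite scalerBr sumrB -scaler_suml -sxy; congr (_ - _).
  by rewrite scaler_sumr; apply: eq_bigr => l _; rewrite !scalerA mulrC.
rewrite -(ler_pM2l s_gt0) -{1}(ger0_norm s0) -normrZ key.
by apply: le_trans (norm_wsum_le y0 to_vertex) _; rewrite -sxy.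
Qed.

Lemma norm_convex_sub_le {x y v l0 c B} :
  (forall i, 0 <= x i) -> (forall i, 0 <= y i) -> \sum_i x i = 1 -> \sum_i y i = 1 ->
  c <= x l0 -> c <= y l0 -> (forall i l, `|v i - v l| <= B) ->
  `|\sum_i x i *: v i - \sum_i y i *: v i| <= (1 - c) * B.
Proof.
move=> x0 y0 sx sy cx cy vB.
pose drop (z : 'I_n -> R) i := z i - c * (i == l0)%:R.
have drop_ge0 z i : 0 <= z i -> c <= z l0 -> 0 <= drop z i.
  by rewrite /drop; case: eqP => [->|_] z0 zc; rewrite ?mulr1 ?subr_ge0 ?mulr0 ?subr0.
have sum_drop z : \sum_i drop z i = \sum_i z i - c.
  rewrite sumrB -mulr_sumr; congr (_ - _).
  by rewrite (bigD1 l0) //= eqxx big1 ?addr0 ?mulr1 // => i /negbTE ->.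
have wsum_drop z : \sum_i drop z i *: v i = \sum_i z i *: v i - c *: v l0.
  rewrite (eq_bigr (fun i => z i *: v i - (c * (i == l0)%:R) *: v i)); last first.
    by move=> i _; rewrite scalerBl.
  rewrite sumrB; congr (_ - _).
  rewrite (bigD1 l0) //= eqxx mulr1 big1 ?addr0 // => i /negbTE ->.
  by rewrite mulr0 scale0r.
have -> : \sum_i x i *: v i - \sum_i y i *: v i =
          \sum_i drop x i *: v i - \sum_i drop y i *: v i.
  by rewrite !wsum_drop opprB addrA subrK.
rewrite -sx -sum_drop.
apply: norm_wsum_sub_le => // [i|i|]; [exact: drop_ge0|exact: drop_ge0|].
by rewrite !sum_drop sx sy.
Qed.
End WeightedSums.

Lemma consecutive_at_odd_distance (P : pred nat) p t :
  P p -> P (p + (2 * t).+1)%N ->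
  exists q j, [/\ (p <= q)%N, P q, P (q + 2 * j).+1 &
                  forall l, (q < l <= q + 2 * j)%N -> ~~ P l].
Proof.
elim/ltn_ind: t p => t IH p Pp Pend.
have ex_next : exists l, (p < l)%N && P l.
  by exists (p + (2 * t).+1)%N; rewrite Pend andbT; lia.
case: (ex_minnP ex_next) => q1 /andP [p_lt_q1 Pq1] q1_min.
have q1_le : (q1 <= p + (2 * t).+1)%N by apply: q1_min; rewrite Pend andbT; lia.
have gap l : (p < l < q1)%N -> ~~ P l.
  case/andP=> p_lt_l l_lt_q1; apply/negP => Pl.
  by have := q1_min l; rewrite p_lt_l Pl => /(_ isT); lia.
pose s := ((q1 - p) %/ 2)%N.
have [q1_even|q1_odd] : (q1 = p + 2 * s)%N \/ (q1 = (p + 2 * s).+1)%N.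
  by have := divn_eq (q1 - p) 2; have := ltn_pmod (q1 - p) (isT : (0 < 2)%N); lia.
- have ts_lt_t : (t - s < t)%N by lia.
  have Pend' : P (q1 + (2 * (t - s)).+1)%N.
    by rewrite (_ : (q1 + (2 * (t - s)).+1 = p + (2 * t).+1)%N) //; lia.
  have [q [j [q1_le_q Pq Pqj gap_q]]] := IH _ ts_lt_t q1 Pq1 Pend'.
  by exists q, j; split=> //; lia.
- exists p, s; split=> //; first by rewrite -q1_odd.
  by move=> l l_in; apply: gap; lia.
Qed.

Section Cones.
Context {R : realType} {k : nat -> nat}.
Hypothesis k_ge1 : forall i, (1 <= i)%N -> (1 <= k i)%N.

Local Notation M := (@Mprod R k).
Local Notation i0 := (@Ordinal 3 0 isT).
Local Notation i1 := (@Ordinal 3 1 isT).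
Local Notation i2 := (@Ordinal 3 2 isT).

Lemma ord3P (i : 'I_3) : [\/ i = i0, i = i1 | i = i2].
Proof.
by case: i => [[|[|[|//]]] ?]; [constructor 1|constructor 2|constructor 3];
  apply: val_inj.
Qed.

Lemma sum3 (F : 'I_3 -> R) : \sum_(i < 3) F i = F i0 + F i1 + F i2.
Proof.
by rewrite !big_ord_recr big_ord0 /= add0r; congr (F _ + F _ + F _); apply: val_inj.
Qed.

Lemma mulmx_ge0 m n p (A : 'M[R]_(m, n)) (C : 'M[R]_(n, p)) :
  (forall i j, 0 <= A i j) -> (forall i j, 0 <= C i j) ->
  forall i j, 0 <= (A *m C) i j.
Proof. by move=> A0 C0 i j; rewrite mxE sumr_ge0 // => l _; rewrite mulr_ge0. Qed.

Lemma Qplus_mulmx (y : 'rV[R]_3) (A : 'M[R]_3) :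
  Qplus y -> (forall i j, 0 <= A i j) -> Qplus (y *m A).
Proof. by move=> y0 A0 j; apply: mulmx_ge0 => // i l; rewrite ord1. Qed.

Lemma Bmx_ge0 m : (1 <= m)%N -> forall i j, 0 <= Bmx m i j :> R.
Proof.
rewrite -(ler_nat R) => m_ge1 i j; rewrite mxE.
by case: (ord3P i) => ->; case: (ord3P j) => -> /=; rewrite ?subr_ge0 ?ler0n.
Qed.

Lemma Mprod_ge0 n i j : 0 <= M n i j.
Proof.
elim: n i j => [|n IH] i j; first by rewrite mxE ler0n.
by apply: mulmx_ge0 => //; apply: Bmx_ge0; apply: k_ge1.
Qed.

Lemma Bmx_unit m : (Bmx m : 'M[R]_3) \in unitmx.
Proof.
pose Binv : 'M[R]_3 := \matrix_(i < 3, j < 3)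
  nth 0 (nth [::] [:: [:: 0; 1; 0]; [:: m%:R; 0; 1 - m%:R]; [:: -1; 0; 1]] i) j.
have /mulmx1_unit [] // : Bmx m *m Binv = 1%:M.
apply/matrixP => i j; rewrite !mxE sum3 !mxE.
by case: (ord3P i) => ->; case: (ord3P j) => -> /=; ring.
Qed.

Lemma Mprod_unit n : M n \in unitmx.
Proof.
elim: n => [|n IH]; first exact: unitmx1.
by rewrite /= unitmx_mul Bmx_unit.
Qed.

Definition vsum {n} (v : 'rV[R]_n) : R := \sum_j v 0 j.
Definition normalize {n} (v : 'rV[R]_n) := (vsum v)^-1 *: v.

Lemma vsumZ n c (v : 'rV[R]_n) : vsum (c *: v) = c * vsum v.
Proof. by rewrite /vsum mulr_sumr; apply: eq_bigr => j _; rewrite mxE. Qed.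

Lemma vsumE n (v : 'rV[R]_n) : vsum v = (v *m (const_mx 1 : 'cV_n)) 0 0.
Proof. by rewrite mxE; apply: eq_bigr => j _; rewrite mxE mulr1. Qed.

Lemma vsum_gt0 n (v : 'rV[R]_n) : (forall j, 0 <= v 0 j) -> v != 0 -> 0 < vsum v.
Proof.
move=> v0; apply: contraNT; rewrite -leNgt => vsum_le0; apply/eqP/rowP => j.
have vsum0 : vsum v = 0 by apply/le_anti; rewrite vsum_le0 sumr_ge0.
by rewrite mxE; apply: (psumr_eq0P (fun j _ => v0 j) vsum0).
Qed.

Lemma vsum_mulmx m n (u : 'rV[R]_m) (A : 'M[R]_(m, n)) :
  vsum (u *m A) = \sum_i u 0 i * vsum (row i A).
Proof.
rewrite /vsum; under eq_bigr do rewrite mxE.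
rewrite exchange_big; apply: eq_bigr => i _; rewrite mulr_sumr.
by apply: eq_bigr => j _; rewrite mxE.
Qed.

Lemma mulmx_Mprod_neq0 n (y : 'rV[R]_3) : y != 0 -> y *m M n != 0.
Proof.
by apply: contraNneq => y0; rewrite -(mulmxK (Mprod_unit n) y) y0 mul0mx.
Qed.

Lemma vsum_mulmx_gt0 n (y : 'rV[R]_3) : Qplus y -> y != 0 -> 0 < vsum (y *m M n).
Proof.
move=> y0 y_neq0; apply: vsum_gt0; last exact: mulmx_Mprod_neq0.
by apply: Qplus_mulmx => //; apply: Mprod_ge0.
Qed.

Definition rowsum n i := vsum (row i (M n)).
Definition vertex n i := normalize (row i (M n)).

Lemma rowsum_succ n i : rowsum n.+1 i = \sum_l Bmx (k n.+1) i l * rowsum n l.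
Proof. by rewrite /rowsum row_mul vsum_mulmx; under eq_bigr do rewrite mxE. Qed.

Lemma rowsum_invariant n :
  [/\ 0 < rowsum n i0, 0 < rowsum n i1,
      rowsum n i0 <= rowsum n i2 & rowsum n i1 <= rowsum n i2].
Proof.
elim: n => [|n [s0 s1 s02 s12]].
  by rewrite /rowsum /vsum !sum3 !mxE /= !addr0 !add0r lexx ltr01.
have kn : 1 <= (k n.+1)%:R :> R by rewrite ler1n; apply: k_ge1.
rewrite !rowsum_succ !sum3 !mxE /=.
split; nra.
Qed.

Lemma rowsum_gt0 n i : 0 < rowsum n i.
Proof. by have [? ? ? ?] := rowsum_invariant n; case: (ord3P i) => ->; lra. Qed.

Definition hull n c (X : 'rV[R]_3) := exists w : 'I_3 -> R,
  [/\ forall i, 0 <= w i, \sum_i w i = 1, c <= w i2 & X = \sum_i w i *: vertex n i].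

Lemma normalize_mulmx_hull n (y : 'rV[R]_3) c :
  Qplus y -> 0 < vsum (y *m M n) -> c * vsum (y *m M n) <= y 0 i2 * rowsum n i2 ->
  hull n c (normalize (y *m M n)).
Proof.
set S := vsum _ => y0 S_gt0 c_le.
have S_E : S = \sum_i y 0 i * rowsum n i by rewrite /S vsum_mulmx.
exists (fun i => y 0 i * rowsum n i / S); split.
- by move=> i; rewrite divr_ge0 ?mulr_ge0 // ltW // rowsum_gt0.
- by rewrite -mulr_suml -S_E divff // gt_eqF.
- by rewrite ler_pdivlMr.
rewrite /normalize -/S mulmx_sum_row scaler_sumr; apply: eq_bigr => i _.
rewrite /vertex /normalize !scalerA -/(rowsum n i); congr (_ *: _).
by field; rewrite !gt_eqF ?rowsum_gt0.
Qed.

Lemma in_cone_scale n (x : 'rV[R]_3) t :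
  0 <= t -> in_cone (M n) x -> in_cone (M n) (t *: x).
Proof.
move=> t0 [y [y0 ->]]; exists (t *: y); split; last by rewrite scalemxAl.
by move=> j; rewrite mxE mulr_ge0.
Qed.

Lemma in_cone_mono n m (x : 'rV[R]_3) :
  (n <= m)%N -> in_cone (M m) x -> in_cone (M n) x.
Proof.
elim: m x => [|m IH] x; first by rewrite leqn0 => /eqP ->.
rewrite leq_eqVlt => /predU1P [-> //|n_le_m] [y [y0 ->]].
apply: (IH _ n_le_m); exists (y *m Bmx (k m.+1)); split; last by rewrite mulmxA.
by apply: Qplus_mulmx => //; apply: Bmx_ge0; apply: k_ge1.
Qed.

Lemma in_cone_hull n (x : 'rV[R]_3) :
  in_cone (M n) x -> x != 0 -> hull n 0 (normalize x).
Proof.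
move=> [y [y0 ->]] x_neq0.
have y_neq0 : y != 0 by apply: contraNneq x_neq0 => ->; rewrite mul0mx.
apply: normalize_mulmx_hull => //; first exact: vsum_mulmx_gt0.
by rewrite mul0r mulr_ge0 // ltW // rowsum_gt0.
Qed.

Lemma row_in_cone n m i : (n <= m)%N -> in_cone (M n) (row i (M m)).
Proof.
move=> n_le_m; apply: in_cone_mono n_le_m _.
exists (delta_mx 0 i); split; last exact: rowE.
by move=> j; rewrite mxE ler0n.
Qed.

Lemma vertex_in_cone n m i : (n <= m)%N -> in_cone (M n) (vertex m i).
Proof.
move=> n_le_m; apply: in_cone_scale; last exact: row_in_cone.
by rewrite invr_ge0 ltW // rowsum_gt0.
Qed.

Lemma vertex_hull n m i : (n <= m)%N -> hull n 0 (vertex m i).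
Proof.
move=> n_le_m; apply: in_cone_hull; first exact: row_in_cone.
apply: contraTneq (rowsum_gt0 m i) => row0.
by rewrite /rowsum row0 /vsum big1 ?ltxx // => j _; rewrite mxE.
Qed.

(* (B_1 B_1)^j, the product over a run of 2 j indices with k = 1 *)
Definition run_mx (j : nat) : 'M[R]_3 := \matrix_(i < 3, l < 3)
  nth 0 (nth [::] [:: [:: 1; 0; 0]; [:: 0; 1; 0]; [:: j%:R; j%:R; 1]] i) l.

Lemma run_mxS j : Bmx 1 *m (Bmx 1 *m run_mx j) = run_mx j.+1.
Proof.
apply/matrixP => i l; rewrite !mxE !sum3 !mxE !sum3 !mxE.
by case: (ord3P i) => ->; case: (ord3P l) => -> /=; rewrite -?natr1; ring.
Qed.

Lemma Mprod_run n j : (forall l, (n < l <= n + 2 * j)%N -> k l = 1%N) ->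
  M (n + 2 * j) = run_mx j *m M n.
Proof.
elim: j => [|j IH] ones.
  have -> : run_mx 0 = 1%:M.
    by apply/matrixP => i l; rewrite !mxE; case: (ord3P i) => ->; case: (ord3P l) => ->.
  by rewrite muln0 addn0 mul1mx.
rewrite (_ : (n + 2 * j.+1 = (n + 2 * j).+2)%N); last by lia.
rewrite /= !ones; try lia.
rewrite IH => [|l l_in]; last by apply: ones; lia.
by rewrite !mulmxA -(mulmxA (Bmx 1)) run_mxS.
Qed.

Lemma block_row_weights {K k1} j i : (1 < K)%N -> (1 < k1)%N ->
  let y := row i (Bmx K *m run_mx j *m Bmx k1) in
  [/\ Qplus y, y != 0 & y 0 i0 + y 0 i1 <= 3 * y 0 i2].
Proof.
rewrite -!(ler_nat R) => K_ge2 k1_ge2 y.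
have j0 : 0 <= j%:R :> R by rewrite ler0n.
have K_1 : 0 <= K%:R - 1 :> R by lra.
have k1_1 : 0 <= k1%:R - 1 :> R by lra.
have Kj := mulr_ge0 K_1 j0.
have Kjk := mulr_ge0 Kj k1_1.
have yE l : y 0 l = \sum_a (\sum_b Bmx K i b * run_mx j b a) * Bmx k1 a l.
  by rewrite !mxE; apply: eq_bigr => a _; rewrite mxE.
have y2_gt0 : 0 < y 0 i2.
  rewrite yE !sum3 !mxE /=; case: (ord3P i) => -> /=;
  rewrite ?(mul0r, mulr0, mul1r, mulr1, add0r, addr0); nra.
split.
- move=> l; rewrite yE !sum3 !mxE; case: (ord3P i) => ->; case: (ord3P l) => -> /=;
  rewrite ?(mul0r, mulr0, mul1r, mulr1, add0r, addr0); nra.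
- by apply: contraTneq y2_gt0 => ->; rewrite mxE ltxx.
- rewrite !yE !sum3 !mxE; case: (ord3P i) => -> /=;
  rewrite ?(mul0r, mulr0, mul1r, mulr1, add0r, addr0); nra.
Qed.

Lemma quarter_weight n (y : 'rV[R]_3) : Qplus y -> y 0 i0 + y 0 i1 <= 3 * y 0 i2 ->
  1/4 * vsum (y *m M n) <= y 0 i2 * rowsum n i2.
Proof.
move=> y0 y_ineq; rewrite vsum_mulmx sum3 -!/(rowsum n _).
have [s0 s1 s02 s12] := rowsum_invariant n.
have := y0 i0; have := y0 i1; nra.
Qed.

Definition diam_le n B := forall i l, `|vertex n i - vertex n l| <= B.

Lemma hull_dist_le n c B X Y :
  diam_le n B -> hull n c X -> hull n c Y -> `|X - Y| <= (1 - c) * B.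
Proof.
move=> dB [x [x0 sx cx ->]] [y [y0 sy cy ->]].
exact: norm_convex_sub_le x0 y0 sx sy cx cy dB.
Qed.

Lemma diam_le_mono n m B : (n <= m)%N -> diam_le n B -> diam_le m B.
Proof.
move=> n_le_m dB i l; rewrite -[B]mul1r -[1]subr0.
by apply: hull_dist_le dB _ _; apply: vertex_hull.
Qed.

Lemma diam_le_block n j B : (1 < k n.+1)%N -> (1 < k (n.+1 + 2 * j).+1)%N ->
  (forall l, (n.+1 < l <= n.+1 + 2 * j)%N -> k l = 1%N) ->
  diam_le n B -> diam_le (n.+1 + 2 * j).+1 (3/4 * B).
Proof.
move=> k1_gt1 K_gt1 ones dB.
set G := Bmx (k (n.+1 + 2 * j).+1) *m run_mx j *m Bmx (k n.+1).
have MG : M (n.+1 + 2 * j).+1 = G *m M n.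
  have -> : M (n.+1 + 2 * j).+1 = Bmx (k (n.+1 + 2 * j).+1) *m M (n.+1 + 2 * j) by [].
  by rewrite Mprod_run // /G -!mulmxA.
have quarter i : hull n (1/4) (vertex (n.+1 + 2 * j).+1 i).
  have [y0 y_neq0 y_ineq] := block_row_weights j i K_gt1 k1_gt1.
  rewrite /vertex MG row_mul; apply: normalize_mulmx_hull => //.
  - exact: vsum_mulmx_gt0.
  - exact: quarter_weight.
move=> i l; rewrite (_ : 3/4 = 1 - 1/4); last by field.
exact: hull_dist_le.
Qed.

Hypothesis k_even : forall N, exists i, (N <= i)%N /\ (1 < k (2 * i))%N.
Hypothesis k_odd :
  forall N, exists i, (N <= i)%N /\ (1 <= i)%N /\ (1 < k (2 * i - 1))%N.

(* Between an even index with k > 1 and a later odd one, two consecutive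
   indices with k > 1 lie at odd distance. *)
Lemma exists_block N : exists n j,
  [/\ (N <= n)%N, (1 < k n.+1)%N, (1 < k (n.+1 + 2 * j).+1)%N &
      forall l, (n.+1 < l <= n.+1 + 2 * j)%N -> k l = 1%N].
Proof.
have [i [N_lt_i ki]] := k_even N.+1.
have [i' [i_lt_i' [_ ki']]] := k_odd (2 * i).+1.
have ki'E : (2 * i + (2 * (i' - i - 1)).+1 = 2 * i' - 1)%N by lia.
rewrite -ki'E in ki'.
have [q [j [i_le_q kq kqj gap]]] :=
  @consecutive_at_odd_distance (fun l => 1 < k l)%N _ _ ki ki'.
exists q.-1, j; rewrite prednK; last by lia.
split=> //; first by lia.
move=> l l_in; have := gap l l_in; have := k_ge1 l; lia.
Qed.

Lemma exists_diam_le n : exists B, diam_le n B.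
Proof.
exists (\big[Num.max/0]_(p : 'I_3 * 'I_3) `|vertex n p.1 - vertex n p.2|) => i l.
exact: (le_bigmax 0 (fun p : 'I_3 * 'I_3 => `|vertex n p.1 - vertex n p.2|) (i, l)).
Qed.

Lemma diam_le_small {e} : 0 < e -> exists n, diam_le n e.
Proof.
move=> e_gt0; have [B0 dB0] := exists_diam_le 0.
have geometric i : exists n, diam_le n ((3/4) ^+ i * B0).
  elim: i => [|i [n dB]]; first by exists 0%N; rewrite expr0 mul1r.
  have [m [j [n_le_m k1_gt1 K_gt1 ones]]] := exists_block n.
  exists (m.+1 + 2 * j).+1; rewrite exprS -mulrA.
  by apply: diam_le_block => //; apply: diam_le_mono dB.
have pow_cvg0 : (fun i => (3/4) ^+ i * B0) @ \oo --> (0 : R).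
  by rewrite -(mul0r B0); apply: cvgMr_tmp; apply: cvg_expr; rewrite ger0_norm; lra.
have [N _ small] := cvgr0_norm_lt _ pow_cvg0 _ e_gt0.
have [n dB] := geometric N.
have /= small_N := small N (leqnn N).
exists n => i l; apply: le_trans (dB i l) _.
exact: le_trans (ler_norm _) (ltW small_N).
Qed.

Definition direction := lim ((fun m => vertex m i2) @ \oo).

Lemma vertex_cvg : (fun m => vertex m i2) @ \oo --> direction.
Proof.
apply: cauchy_cvg; apply: cauchy_exP => e e_gt0.
have [n dB] : exists n, diam_le n (e / 2) by apply: diam_le_small; lra.
exists (vertex n i2); exists n => // m /= n_le_m.
rewrite mx_norm_ball /ball_ /=.
apply: le_lt_trans (_ : (1 - 0) * (e / 2) < e); last lra.
by apply: hull_dist_le dB _ _; apply: vertex_hull.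
Qed.

Lemma hull_dist_direction n B X : diam_le n B -> hull n 0 X -> `|X - direction| <= B.
Proof.
move=> dB hX.
apply: cvgr_to_le (cvg_norm (cvgB (cvg_cst X) vertex_cvg)) _.
exists n => // m /= n_le_m; rewrite -[B]mul1r -[1]subr0.
by apply: hull_dist_le dB hX _; apply: vertex_hull.
Qed.

Lemma cvg_mulmx_entry {m n p} {u : nat -> 'M[R]_(m, n)} {l : 'M[R]_(m, n)}
    (A : 'M[R]_(n, p)) i j :
  u @ \oo --> l -> (fun t => (u t *m A) i j) @ \oo --> (l *m A) i j.
Proof.
move=> ul; rewrite mxE; under eq_cvg do rewrite mxE.
apply: (cvg_big add_continuous) => a _.
by apply: cvgMr_tmp; exact: (cvg_comp _ _ ul (@coord_continuous _ _ _ i a l)).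
Qed.

Lemma in_coneP n (x : 'rV[R]_3) : in_cone (M n) x <-> Qplus (x *m invmx (M n)).
Proof.
split=> [[y [y0 ->]]|x0]; first by rewrite mulmxK // Mprod_unit.
by exists (x *m invmx (M n)); rewrite mulmxKV // Mprod_unit.
Qed.

Lemma direction_in_cone n : in_cone (M n) direction.
Proof.
(* the cone is closed, being the preimage of Q^+ under x |-> x M_n^-1 *)
apply/in_coneP => j.
apply: cvgr_to_ge (cvg_mulmx_entry (invmx (M n)) 0 j vertex_cvg) _.
exists n => // m /= n_le_m.
by have /in_coneP := vertex_in_cone _ _ i2 n_le_m; apply.
Qed.

Lemma direction_neq0 : direction != 0.
Proof.
have : 1 <= vsum direction.
  rewrite vsumE.
  apply: cvgr_to_ge (cvg_mulmx_entry (const_mx 1 : 'cV_3) 0 0 vertex_cvg) _.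
  apply: nearW => m /=; rewrite -vsumE /vertex /normalize vsumZ mulVf //.
  exact: lt0r_neq0 (rowsum_gt0 m i2).
by apply: contraTneq => ->; rewrite /vsum big1 ?ler10 // => j _; rewrite mxE.
Qed.

Lemma norm1_Qplus (x : 'rV[R]_3) : Qplus x -> norm1 x = vsum x.
Proof. by move=> x0; apply: eq_bigr => j _; rewrite ger0_norm. Qed.

Lemma in_cone_Qplus n (x : 'rV[R]_3) : in_cone (M n) x -> Qplus x.
Proof. by case=> y [y0 ->]; apply: Qplus_mulmx => //; apply: Mprod_ge0. Qed.

Lemma normalize_in_all_cones (x : 'rV[R]_3) :
  (forall n, in_cone (M n) x) -> x != 0 -> normalize x = direction.
Proof.
move=> x_in x_neq0; apply/eqP; rewrite -subr_eq0 -normr_le0.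
apply/ler_addgt0Pr => e e_gt0; rewrite add0r.
have [n dB] := diam_le_small e_gt0.
by apply: hull_dist_direction dB _; apply: in_cone_hull.
Qed.

Lemma in_all_cones_iff (x : 'rV[R]_3) :
  (forall n, in_cone (M n) x) <-> exists t, 0 <= t /\ x = t *: direction.
Proof.
split=> [x_in | [t [t0 ->]] n]; last exact/in_cone_scale/direction_in_cone.
have [->|x_neq0] := eqVneq x 0; first by exists 0; rewrite scale0r lexx.
have x_gt0 : 0 < vsum x by apply: vsum_gt0 x_neq0; exact: in_cone_Qplus (x_in 0%N).
exists (vsum x); split; first exact: ltW.
by rewrite -(normalize_in_all_cones x x_in x_neq0) scalerA divff ?scale1r // gt_eqF.
Qed.

Lemma normalize_orbit_cvg (a : 'rV[R]_3) : Qplus a -> a != 0 ->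
  (fun n => normalize (a *m M n)) @ \oo --> direction.
Proof.
move=> a0 a_neq0; apply/cvgrPdist_lt => e e_gt0.
have [N dB] : exists N, diam_le N (e / 2) by apply: diam_le_small; lra.
exists N => // n /= N_le_n; rewrite distrC.
apply: le_lt_trans (_ : e / 2 < e); last lra.
apply: hull_dist_direction dB _; apply: in_cone_hull; last exact: mulmx_Mprod_neq0.
by apply: in_cone_mono N_le_n _; exists a.
Qed.

End Cones.

Theorem lemma3p3 (R : realType) (k : nat -> nat)
  (hk : forall i, (1 <= i)%N -> (1 <= k i)%N)
  (heven : forall N : nat, exists i : nat, (N <= i)%N /\ (1 < k (2 * i))%N)
  (hodd : forall N : nat, exists i : nat, (N <= i)%N /\ (1 <= i)%N /\ (1 < k (2 * i - 1))%N) :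
  (* the intersection of the cones Q^+ B_{k_n}...B_{k_1}, n >= 1, is a single half-line *)
  (exists d : 'rV[R]_3, d != 0 /\
     forall x : 'rV[R]_3,
       (forall n : nat, (1 <= n)%N -> in_cone (Mprod k n) x) <->
       (exists t : R, 0 <= t /\ x = t *: d))
  /\
  (* equivalently: the normalized vectors a B_{k_n}...B_{k_1} converge to a limit
     independent of the nonzero a in Q^+ *)
  (exists u : 'rV[R]_3, forall a : 'rV[R]_3, Qplus a -> a != 0 ->
     (fun n : nat => (norm1 (a *m Mprod k n))^-1 *: (a *m Mprod k n)) @ \oo --> u).
Proof.
split; exists (@direction R k).
- split=> [|x]; first exact: direction_neq0 hk heven hodd.
  rewrite -(in_all_cones_iff hk heven hodd); split=> [x_in n|x_in n _]; last exact: x_in.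
  exact: (in_cone_mono hk n n.+1 x (leqnSn n) (x_in n.+1 isT)).
- move=> a a0 a_neq0.
  have orbit_Qplus n : Qplus (a *m Mprod k n).
    by apply: Qplus_mulmx => //; exact: Mprod_ge0.
  under eq_cvg => n do rewrite norm1_Qplus ?orbit_Qplus //.
  exact: normalize_orbit_cvg.
Qed.
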